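(* Let $\mathcal{T}$ be a directed poset, $X:\mathcal{T}\to\mathbf{Set}_*$ a diagram of pointed sets and $A$ an abelian group. Then the natural map $\rho:(\lim_\mathcal{T}X)\wedge A\to\lim_\mathcal{T}(X\wedge A)$ is injective.
   Context: A directed poset $\mathcal{T}$ is regarded as a category with a single morphism $t\to s$ whenever $t\ge s$; for $t\geq s$ write $\phi_{t,s}:X(t)\to X(s)$ for the structure map. For a pointed set $Y$ (base point $*$), $Y\wedge A:=\bigoplus_{Y\setminus\{*\}}A$, whose elements are finitely supported pointed maps $Y\to A$; for $s\in Y$, $v\in A$, $sv$ is the element with value $v$ at $s$ and $0$ elsewhere ($*v=0$); a pointed map $f$ induces $f_*(sv)=f(s)v$. The natural map $\rho$ is defined by $\rho(xv)(t)=x(t)v$ for $x\in\lim_\mathcal{T}X$, $v\in A$, $t\in\mathcal{T}$. *)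

From HB Require Import structures.
From mathcomp Require Import all_boot all_order all_algebra.
From Stdlib Require List.
From Stdlib Require Import ClassicalDescription ClassicalEpsilon.
Set Implicit Arguments. Unset Strict Implicit. Unset Printing Implicit Defensive.
Import GRing.Theory.
Local Open Scope ring_scope.

Definition directed_poset (T : Type) (le : T -> T -> Prop) : Prop :=
  [/\ (forall t, le t t),
      (forall a b c, le a b -> le b c -> le a c),
      (forall a b, le a b -> le b a -> a = b),
      (exists t : T, True) &
      (forall a b, exists c, le a c /\ le b c)].

Definition pointed_diagram (T : Type) (le : T -> T -> Prop) (X : T -> Type)
  (pt : forall t, X t) (phi : forall t s, le s t -> X t -> X s) : Prop :=
  [/\ (forall t s (H : le s t), phi t s H (pt t) = pt s),
      (forall t (H : le t t) (x : X t), phi t t H x = x) &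
      (forall t s r (Hts : le s t) (Hsr : le r s) (Htr : le r t) (x : X t),
          phi s r Hsr (phi t s Hts x) = phi t r Htr x)].

Definition plim (T : Type) (le : T -> T -> Prop) (X : T -> Type)
  (phi : forall t s, le s t -> X t -> X s) : Type :=
  {x : forall t, X t | forall t s (H : le s t), phi t s H (x t) = x s}.

Definition plim_base (T : Type) (le : T -> T -> Prop) (X : T -> Type)
  (pt : forall t, X t) (phi : forall t s, le s t -> X t -> X s)
  (x : plim phi) : Prop :=
  forall t, proj1_sig x t = pt t.
Arguments plim_base {T le X} pt phi x.

(* Y /\ A for a pointed set Y (base point described by the predicate isbase):
   finitely supported maps Y -> A vanishing at the base point. *)
Definition smash (Y : Type) (isbase : Y -> Prop) (A : zmodType) : Type :=
  {f : Y -> A | (forall y, isbase y -> f y = 0) /\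
                (exists s : seq Y, List.NoDup s /\ forall y, f y <> 0 -> List.In y s)}.

Definition smash_supp (Y : Type) (isbase : Y -> Prop) (A : zmodType)
  (f : smash isbase A) : seq Y :=
  proj1_sig (constructive_indefinite_description _ (proj2 (proj2_sig f))).

(* This is the additive extension of
   rho(x v)(t) = x(t) v. *)
Definition rho (T : Type) (le : T -> T -> Prop) (X : T -> Type)
  (pt : forall t, X t) (phi : forall t s, le s t -> X t -> X s) (A : zmodType)
  (f : smash (plim_base pt phi) A) (t : T) (y : X t) : A :=
  if excluded_middle_informative (y = pt t) then 0
  else \sum_(x <- smash_supp f)
         (if excluded_middle_informative (proj1_sig x t = y)
          then proj1_sig f x else 0).
Arguments rho {T le X pt phi A} f t y.

(* Let f, g be elements of (lim X) /\ A with rho f = rho g, and let x0 be a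
   point of lim X; we show f x0 = g x0.  If x0 is the base point, both values
   vanish.  Otherwise x0 t0 is not the base point at some stage t0.  The
   supports of f and g are finite, and two distinct points of the limit
   differ at some stage and then at every later stage; since T is directed,
   there is one stage ts >= t0 at which every support point different from
   x0 differs from x0.  At that stage the sum defining rho h ts (x0 ts) has
   the single term h x0, so f x0 = rho f ts (x0 ts) = rho g ts (x0 ts) = g x0. *)
From mathcomp Require Import all_boot all_order all_algebra.
From Stdlib Require Import Classical FunctionalExtensionality ProofIrrelevance.
From Stdlib Require Import ClassicalDescription ClassicalEpsilon.
Set Implicit Arguments. Unset Strict Implicit. Unset Printing Implicit Defensive.
Import GRing.Theory.
Local Open Scope ring_scope.

Lemma sum_single_selected (A : zmodType) (Y : Type) (s : seq Y) (F : Y -> A)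
  (P : Y -> Prop) (x0 : Y) :
  List.NoDup s -> P x0 -> (forall x, List.In x s -> x <> x0 -> ~ P x) ->
  \sum_(x <- s) (if excluded_middle_informative (P x) then F x else 0)
  = if excluded_middle_informative (List.In x0 s) then F x0 else 0.
Proof.
elim: s => [|a s IH] Hnd HP Hs.
  by rewrite big_nil; case: excluded_middle_informative.
inversion Hnd as [|a' s' Ha_notin Hnd_s E]; subst.
rewrite big_cons IH //; last by move=> x Hx; apply: Hs; right.
case: (classic (a = x0)) => [Ea|ne_a]; first subst a.
- (* the head is x0: its term is the whole sum, since x0 does not recur *)
  case: excluded_middle_informative => [Px0|[]] //=.
  case: excluded_middle_informative => [/Ha_notin []|x0_notin] /=.
  case: excluded_middle_informative => [x0_in|[]]; last by left.
  by rewrite addr0.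
-
  case: excluded_middle_informative => [Pa|nPa] /=.
    by case: (Hs a (or_introl erefl) ne_a Pa).
  rewrite add0r.
  case: excluded_middle_informative => [in_s|notin_s];
    case: excluded_middle_informative => [in_as|notin_as] //=.
  + by case: notin_as; right.
  + by case: in_as => // /ne_a.
Qed.

Lemma directed_common_stage (T : Type) (le : T -> T -> Prop) (Y : Type)
  (Q : Y -> T -> Prop) :
  directed_poset le ->
  (forall y t t', Q y t -> le t t' -> Q y t') ->
  forall (L : seq Y) t0, (forall y, List.In y L -> exists t, Q y t) ->
  exists t, le t0 t /\ forall y, List.In y L -> Q y t.
Proof.
case=> refl trans _ _ dir Q_up; elim=> [|a L IH] t0 HL.
  by exists t0.
have [t1 [Ht01 Ht1]] := IH t0 (fun y Hy => HL y (or_intror Hy)).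
have [ta Hta] := HL a (or_introl erefl).
have [c [Ht1c Htac]] := dir t1 ta.
exists c; split; first exact: trans Ht01 Ht1c.
move=> y [<-|Hy]; first exact: Q_up Hta Htac.
exact: Q_up (Ht1 y Hy) Ht1c.
Qed.

Section LimitSeparation.

Variables (T : Type) (le : T -> T -> Prop) (X : T -> Type)
  (phi : forall t s, le s t -> X t -> X s).

Lemma plim_ext (x y : plim phi) :
  (forall t, proj1_sig x t = proj1_sig y t) -> x = y.
Proof.
case: x y => [x Hx] [y Hy] /= Exy.
have Exy_fun := functional_extensionality_dep _ _ Exy; subst y.
by rewrite (proof_irrelevance _ Hx Hy).
Qed.

Lemma plim_differ (x y : plim phi) :
  x <> y -> exists t, proj1_sig x t <> proj1_sig y t.
Proof. by move=> ne_xy; apply: not_all_ex_not => Exy; apply/ne_xy/plim_ext. Qed.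

(* Points of the limit that differ at stage t differ at every later stage,
   since their components at t are images of those at the later stage. *)
Lemma plim_differ_up (x y : plim phi) t t' :
  proj1_sig x t <> proj1_sig y t -> le t t' ->
  proj1_sig x t' <> proj1_sig y t'.
Proof.
move=> ne_t Htt' E; apply: ne_t.
by rewrite -(proj2_sig x t' t Htt') -(proj2_sig y t' t Htt') E.
Qed.

Lemma plim_separating_stage (L : seq (plim phi)) (x0 : plim phi) t0 :
  directed_poset le ->
  exists t, le t0 t /\
    forall y, List.In y L -> y <> x0 -> proj1_sig y t <> proj1_sig x0 t.
Proof.
move=> Hdir.
pose Q y t := y <> x0 -> proj1_sig y t <> proj1_sig x0 t.
apply: (@directed_common_stage T le _ Q Hdir) => [y t t' Qyt Htt' ne|y _].
  exact: plim_differ_up (Qyt ne) Htt'.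
case: (classic (y = x0)) => [->|/plim_differ [t Ht]]; first by exists t0.
by exists t.
Qed.

End LimitSeparation.

Lemma smash_supp_spec (Y : Type) (isbase : Y -> Prop) (A : zmodType)
  (h : smash isbase A) :
  List.NoDup (smash_supp h) /\
  forall y, proj1_sig h y <> 0 -> List.In y (smash_supp h).
Proof. by rewrite /smash_supp; case: constructive_indefinite_description. Qed.

Lemma smash_ext (Y : Type) (isbase : Y -> Prop) (A : zmodType)
  (h k : smash isbase A) : proj1_sig h =1 proj1_sig k -> h = k.
Proof.
case: h k => [h Hh] [k Hk] /= Ehk.
have Ehk_fun := functional_extensionality _ _ Ehk; subst k.
by rewrite (proof_irrelevance _ Hh Hk).
Qed.

Lemma rho_at_separating_stage (T : Type) (le : T -> T -> Prop) (X : T -> Type)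
  (pt : forall t, X t) (phi : forall t s, le s t -> X t -> X s)
  (A : zmodType) (h : smash (plim_base pt phi) A) (x0 : plim phi) (ts : T) :
  proj1_sig x0 ts <> pt ts ->
  (forall y, List.In y (smash_supp h) -> y <> x0 ->
     proj1_sig y ts <> proj1_sig x0 ts) ->
  rho h ts (proj1_sig x0 ts) = proj1_sig h x0.
Proof.
move=> Hx0 Hsep; rewrite /rho.
case: excluded_middle_informative => [/Hx0 //|x0_not_base] /=.
have [Hnd Hcov] := smash_supp_spec h.
rewrite (sum_single_selected _ (P := fun x => proj1_sig x ts = proj1_sig x0 ts)
           Hnd erefl Hsep).
case: excluded_middle_informative => [//|x0_notin].
apply: esym; apply: NNPP => hx0_ne0.
exact: x0_notin (Hcov _ hx0_ne0).
Qed.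

Theorem mainTheorem7 (T : Type) (le : T -> T -> Prop) (X : T -> Type)
  (pt : forall t, X t) (phi : forall t s, le s t -> X t -> X s)
  (A : zmodType) :
  directed_poset le -> pointed_diagram pt phi ->
  forall f g : smash (plim_base pt phi) A,
    (forall t (y : X t), rho f t y = rho g t y) -> f = g.
Proof.
move=> Hdir [Hpt _ _] f g Hfg; apply: smash_ext => x0.
case: (classic (plim_base pt phi x0)) => [Hbase|Hnbase].
  by rewrite (proj1 (proj2_sig f) x0 Hbase) (proj1 (proj2_sig g) x0 Hbase).
have [t0 Ht0] : exists t0, proj1_sig x0 t0 <> pt t0 by apply: not_all_ex_not.
have [ts [Ht0s Hsep]] :=
  plim_separating_stage (smash_supp f ++ smash_supp g) x0 t0 Hdir.
have Hts : proj1_sig x0 ts <> pt ts.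
  by move=> E; apply: Ht0; rewrite -(proj2_sig x0 ts t0 Ht0s) E Hpt.
have Ef : rho f ts (proj1_sig x0 ts) = proj1_sig f x0.
  apply: rho_at_separating_stage => // y Hy; apply: Hsep.
  by apply: List.in_or_app; left.
have Eg : rho g ts (proj1_sig x0 ts) = proj1_sig g x0.
  apply: rho_at_separating_stage => // y Hy; apply: Hsep.
  by apply: List.in_or_app; right.
by rewrite -Ef -Eg Hfg.
Qed.
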